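(* In the FAVANO process, assume each $\nabla f_i$ is $L$-Lipschitz, the stochastic gradients have bounded variance $\sigma^2$, and $\eta<\frac{1}{4LK^2}$ and $\eta<\frac{1}{2LK}$. Then for every client $i$, time step $t\ge0$ and $q\in\{1,\dots,K\}$, $$\mathbb{E}\langle\nabla f(\mu_t),-h^i_{t+1,q}\rangle\le\frac{\mathbb{E}\|\nabla f(\mu_t)\|^2}{4}+C^i_t-\mathbb{E}\langle\nabla f(\mu_t),\nabla f_i(\mu_t)\rangle,$$ where $C^i_t=4L^2\eta^2K^2\sigma^2+20L^2\,\mathbb{E}\|w^i_t-\mu_t\|^2+16L^2\eta^2K^2\,\mathbb{E}\|\nabla f_i(\mu_t)\|^2$.
   Context: FAVANO process. Fix integers $n\ge1$, $1\le s\le n$, $K\ge1$, $d\ge1$, a step size $\eta>0$ and differentiable $f_1,\dots,f_n:\mathbb{R}^d\to\mathbb{R}$, $f=\frac1n\sum_i f_i$. All random variables live on one probability space. For each client $i$ a stochastic gradient oracle returns, at a query point $x$, $\widetilde g^i(x)=\nabla f_i(x)+\xi$ where, conditionally on everything generated before the query (including $x$), $\xi$ has mean zero (each query uses fresh noise). Initialize $w_0\in\mathbb{R}^d$ deterministic and $w_0^i=w_0$ for all $i$. For each $t\ge1$, each client $i$ and each $q\ge1$ define recursively $\widetilde h^i_{t,q}=\widetilde g^i\big(w^i_{t-1}-\eta\sum_{r=1}^{q-1}\widetilde h^i_{t,r}\big)$ and $h^i_{t,q}=\nabla f_i\big(w^i_{t-1}-\eta\sum_{r=1}^{q-1}\widetilde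 h^i_{t,r}\big)$. At each $t\ge1$ there are random integers $E^1_t,\dots,E^n_t\ge0$ with $\mathbf{P}(E^i_t>0)>0$, and a random subset $\mathcal{S}_t\subseteq\{1,\dots,n\}$ uniformly distributed among subsets of size $s$; the family $(\mathcal S_t,E^1_t,\dots,E^n_t)$ is independent of all the other randomness (the past up to time $t-1$ and all $\widetilde h^i_{t,q}$), and $\mathcal S_t$ is independent of $(E^i_t)_i$. The weight $\alpha^i_t$ is either $\mathbf{P}(E^i_t>0)\,(E^i_t\wedge K)$ (stochastic version) or $\mathbb{E}[E^i_t\wedge K]$ (deterministic version), where $a\wedge b=\min(a,b)$. Set $\check h^i_t=\frac{1}{\alpha^i_t}\sum_{q=1}^{E^i_t\wedge K}\widetilde h^i_{t,q}$ if $E^i_t>0$ and $\check h^i_t=0$ otherwise. Updates: $w_t=\frac{1}{s+1}\big(w_{t-1}+\sum_{i\in\mathcal S_t}(w^i_{t-1}-\eta\check h^i_t)\big)$; $w^i_t=w_t$ for $i\in\mathcal S_t$ and $w^i_t=w^i_{t-1}$ for $i\notin\mathcal S_t$. Define $\mu_t=\frac{1}{n+1}\big(w_t+\sum_{i=1}^n w^i_t\big)$. All expectations appearing are assumed finite. Smoothness: $\|\nabla f_i(x)-\nabla f_i(y)\|\le L\|x-y\|$ for all $i,x,y$, with $L>0$. Bounded variance: conditionally on everything generated before a query at $x$, $\mathbb{E}\|\widetilde g^i(x)-\nabla f_i(x)\|^2\le\sigma^2$. *)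

From HB Require Import structures.
From mathcomp Require Import all_boot all_order all_algebra.
From mathcomp Require Import all_classical all_reals all_analysis.
Import Order.TTheory GRing.Theory Num.Theory.
Import numFieldNormedType.Exports.
Local Open Scope classical_set_scope.
Local Open Scope ring_scope.

Set Implicit Arguments.
Unset Strict Implicit.
Unset Printing Implicit Defensive.

Definition dotv (R : realType) (d : nat) (u v : 'rV[R]_d) : R :=
  \sum_(j < d) u 0 j * v 0 j.

Definition enorm (R : realType) (d : nat) (u : 'rV[R]_d) : R :=
  Num.sqrt (dotv u u).

Definition is_gradient (R : realType) (d : nat)
  (g : 'rV[R]_d -> R) (G : 'rV[R]_d -> 'rV[R]_d) : Prop :=
  forall x, differentiable g x /\ forall v, 'd g x v = dotv (G x) v.

(** * The FAVANO process
   Primitive random inputs: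
   - S t : T -> {set 'I_n}              the sampled client set S_t (t >= 1)
   - E t i : T -> nat                   the number of local steps E^i_t (t >= 1)
   - ht t i q : T -> 'rV_d              the stochastic gradient \tilde h^i_{t,q}
                                         (t >= 1, q >= 1), i.e. the oracle answer
   - alpha t i : T -> R                 the weights alpha^i_t *)

Definition alpha_of (R : realType) (dm : measure_display) (T : measurableType dm)
  (P : probability T R) (n K : nat) (E : nat -> 'I_n -> T -> nat)
  (stoch : bool) (t : nat) (i : 'I_n) (w : T) : R :=
  if stoch then
    fine (P [set w' | (0 < E t i w')%N]) * (minn (E t i w) K)%:R
  else
    fine ('E_P[fun w' => (minn (E t i w') K)%:R])%E.

Definition hcheck (R : realType) (T : Type) (n d K : nat)
  (E : nat -> 'I_n -> T -> nat) (ht : nat -> 'I_n -> nat -> T -> 'rV[R]_d)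
  (alpha : nat -> 'I_n -> T -> R) (t : nat) (i : 'I_n) (w : T) : 'rV[R]_d :=
  if (0 < E t i w)%N then
    (alpha t i w)^-1 *: \sum_(1 <= q < (minn (E t i w) K).+1) ht t i q w
  else 0.

Fixpoint fstate (R : realType) (T : Type) (n d s K : nat) (eta : R)
  (w0 : 'rV[R]_d) (S : nat -> T -> {set 'I_n}) (E : nat -> 'I_n -> T -> nat)
  (ht : nat -> 'I_n -> nat -> T -> 'rV[R]_d) (alpha : nat -> 'I_n -> T -> R)
  (t : nat) (w : T) : 'rV[R]_d * {ffun 'I_n -> 'rV[R]_d} :=
  match t with
  | 0 => (w0, [ffun => w0])
  | t'.+1 =>
      let st := fstate s K eta w0 S E ht alpha t' w in
      let wn := (s.+1%:R)^-1 *: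
                  (st.1 + \sum_(i in S t w)
                            (st.2 i - eta *: hcheck K E ht alpha t i w)) in
      (wn, [ffun i => if i \in S t w then wn else st.2 i])
  end.

Definition wsrv (R : realType) (T : Type) (n d s K : nat) (eta : R)
  (w0 : 'rV[R]_d) (S : nat -> T -> {set 'I_n}) (E : nat -> 'I_n -> T -> nat)
  (ht : nat -> 'I_n -> nat -> T -> 'rV[R]_d) (alpha : nat -> 'I_n -> T -> R)
  (t : nat) (w : T) : 'rV[R]_d :=
  (fstate s K eta w0 S E ht alpha t w).1.

Definition wloc (R : realType) (T : Type) (n d s K : nat) (eta : R)
  (w0 : 'rV[R]_d) (S : nat -> T -> {set 'I_n}) (E : nat -> 'I_n -> T -> nat)
  (ht : nat -> 'I_n -> nat -> T -> 'rV[R]_d) (alpha : nat -> 'I_n -> T -> R)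
  (t : nat) (i : 'I_n) (w : T) : 'rV[R]_d :=
  (fstate s K eta w0 S E ht alpha t w).2 i.

Definition mu (R : realType) (T : Type) (n d s K : nat) (eta : R)
  (w0 : 'rV[R]_d) (S : nat -> T -> {set 'I_n}) (E : nat -> 'I_n -> T -> nat)
  (ht : nat -> 'I_n -> nat -> T -> 'rV[R]_d) (alpha : nat -> 'I_n -> T -> R)
  (t : nat) (w : T) : 'rV[R]_d :=
  (n.+1%:R)^-1 *: (wsrv s K eta w0 S E ht alpha t w
                   + \sum_(i < n) wloc s K eta w0 S E ht alpha t i w).

(** query point of the q-th local step of client i in round t (t, q >= 1):
    w^i_{t-1} - eta * sum_{r=1}^{q-1} \tilde h^i_{t,r} *)
Definition query (R : realType) (T : Type) (n d s K : nat) (eta : R)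
  (w0 : 'rV[R]_d) (S : nat -> T -> {set 'I_n}) (E : nat -> 'I_n -> T -> nat)
  (ht : nat -> 'I_n -> nat -> T -> 'rV[R]_d) (alpha : nat -> 'I_n -> T -> R)
  (t : nat) (i : 'I_n) (q : nat) (w : T) : 'rV[R]_d :=
  wloc s K eta w0 S E ht alpha t.-1 i w - eta *: \sum_(1 <= r < q) ht t i r w.

(** * Generated sigma-algebras, through generating events *)

Definition ev_set (T : Type) (n : nat) (X : T -> {set 'I_n}) : set (set T) :=
  [set A | exists B : {set 'I_n}, A = X @^-1` [set B]].

Definition ev_nat (T : Type) (X : T -> nat) : set (set T) :=
  [set A | exists k : nat, A = X @^-1` [set k]].

Definition ev_vec (R : realType) (T : Type) (d : nat) (X : T -> 'rV[R]_d)
  : set (set T) :=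
  [set A | exists (j : 'I_d) (B : set R),
      measurable B /\ A = (fun w => X w 0 j) @^-1` B].

Definition past_events (R : realType) (T : Type) (n d : nat)
  (S : nat -> T -> {set 'I_n}) (E : nat -> 'I_n -> T -> nat)
  (ht : nat -> 'I_n -> nat -> T -> 'rV[R]_d) (t : nat) : set (set T) :=
  [set A | exists r, (0 < r < t)%N /\
      (ev_set (S r) A \/
       exists j, ev_nat (E r j) A \/
                 exists p, (0 < p)%N /\ ev_vec (ht r j p) A)].

Definition round_events (R : realType) (T : Type) (n d : nat)
  (ht : nat -> 'I_n -> nat -> T -> 'rV[R]_d) (t : nat) : set (set T) :=
  [set A | exists j p, (0 < p)%N /\ ev_vec (ht t j p) A].

Definition own_events (R : realType) (T : Type) (n d : nat)
  (ht : nat -> 'I_n -> nat -> T -> 'rV[R]_d) (t : nat) (i : 'I_n) (q : nat)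
  : set (set T) :=
  [set A | exists p, (0 < p < q)%N /\ ev_vec (ht t i p) A].

Definition E_events (T : Type) (n : nat) (E : nat -> 'I_n -> T -> nat)
  (t : nat) : set (set T) :=
  [set A | exists j, ev_nat (E t j) A].

Definition indep (R : realType) (dm : measure_display) (T : measurableType dm)
  (P : probability T R) (F1 F2 : set (set T)) : Prop :=
  forall A B, F1 A -> F2 B -> P (A `&` B) = (P A * P B)%E.

(** E[X | F] = 0 (componentwise), X integrable *)
Definition cond_mean_zero (R : realType) (dm : measure_display)
  (T : measurableType dm) (P : probability T R) (d : nat)
  (F : set (set T)) (X : T -> 'rV[R]_d) : Prop :=
  (forall j, P.-integrable setT (fun w => (X w 0 j)%:E)) /\
  forall A, F A -> forall j, (\int[P]_(w in A) (X w 0 j)%:E = 0)%E.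

(** E[ ||X||^2 | F ] <= sigma^2 almost surely *)
Definition cond_sqnorm_le (R : realType) (dm : measure_display)
  (T : measurableType dm) (P : probability T R) (d : nat)
  (F : set (set T)) (X : T -> 'rV[R]_d) (sigma : R) : Prop :=
  P.-integrable setT (fun w => (enorm (X w) ^+ 2)%:E) /\
  forall A, F A ->
    (\int[P]_(w in A) (enorm (X w) ^+ 2)%:E <= (sigma ^+ 2)%:E * P A)%E.

From HB Require Import structures.
From mathcomp Require Import all_boot all_order all_algebra.
From mathcomp Require Import all_classical all_reals all_analysis.
From mathcomp Require Import ring lra.
Import Order.TTheory GRing.Theory Num.Theory.
Import numFieldNormedType.Exports.
Local Open Scope classical_set_scope.
Local Open Scope ring_scope.

(* The query points of client i in round t+1 are x_r = w^i_t - eta sum_{p<r} h_p.  With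
   xi_p = h_p - grad f_i(x_p) and
     B = 6 |w^i_t - mu_t|^2 + 4 eta^2 (K-1) sum_{p<q} |xi_p|^2 + 8 eta^2 K^2 |grad f_i(mu_t)|^2,
   Young's inequality, Cauchy-Schwarz on sums and L-smoothness give
     |x_r - mu_t|^2 <= 4 |w^i_t - mu_t|^2
       + 4/3 eta^2 (r-1) sum_{p<r} (2 |xi_p|^2 + 4 |grad f_i(mu_t)|^2 + 4 L^2 |x_p - mu_t|^2),
   and since eta < 1/(4LK^2) forces eta^2 L^2 K^2 <= 1/16, strong induction on r yields
   |x_r - mu_t|^2 <= B.  Hence
     - <grad f(mu_t), grad f_i(x_q)>
       <= |grad f(mu_t)|^2 / 4 + L^2 B - <grad f(mu_t), grad f_i(mu_t)>,
   and taking expectations with E |xi_p|^2 <= sigma^2 gives the claim. *)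

Section EuclideanRowVectors.
Context {R : realType} {d : nat}.
Implicit Types u v w : 'rV[R]_d.

Lemma dotvC u v : dotv u v = dotv v u.
Proof. by apply: eq_bigr => j _; rewrite mulrC. Qed.

Lemma dotvDl u v w : dotv (u + v) w = dotv u w + dotv v w.
Proof. by rewrite /dotv -big_split; apply: eq_bigr => j _; rewrite mxE mulrDl. Qed.

Lemma dotvDr u v w : dotv w (u + v) = dotv w u + dotv w v.
Proof. by rewrite dotvC dotvDl !(dotvC w). Qed.

Lemma dotvZl c u v : dotv (c *: u) v = c * dotv u v.
Proof. by rewrite /dotv mulr_sumr; apply: eq_bigr => j _; rewrite mxE mulrA. Qed.

Lemma dotvZr c u v : dotv u (c *: v) = c * dotv u v.
Proof. by rewrite dotvC dotvZl dotvC. Qed.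

Lemma dotvNl u v : dotv (- u) v = - dotv u v.
Proof. by rewrite -scaleN1r dotvZl mulN1r. Qed.

Lemma dotvNr u v : dotv u (- v) = - dotv u v.
Proof. by rewrite dotvC dotvNl dotvC. Qed.

Lemma dotvBr u v w : dotv w (u - v) = dotv w u - dotv w v.
Proof. by rewrite dotvDr dotvNr. Qed.

Lemma dotv_suml I (r : seq I) (F : I -> 'rV[R]_d) v :
  dotv (\sum_(i <- r) F i) v = \sum_(i <- r) dotv (F i) v.
Proof.
rewrite /dotv exchange_big /=; apply: eq_bigr => j _.
by rewrite summxE mulr_suml.
Qed.

Lemma dotv_sumr I (r : seq I) (F : I -> 'rV[R]_d) v :
  dotv v (\sum_(i <- r) F i) = \sum_(i <- r) dotv v (F i).
Proof. by rewrite dotvC dotv_suml; apply: eq_bigr => i _; rewrite dotvC. Qed.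

Lemma dotv_delta u j : dotv u (delta_mx 0 j) = u 0 j.
Proof.
rewrite /dotv (bigD1 j) //= big1 ?addr0; first by rewrite mxE !eqxx mulr1.
by move=> k kj; rewrite mxE (negbTE kj) andbF mulr0.
Qed.

Definition sqnorm u := dotv u u.

Lemma sqnorm_ge0 u : 0 <= sqnorm u.
Proof. by apply: sumr_ge0 => j _; rewrite -expr2 sqr_ge0. Qed.

Lemma enorm_sqnorm u : enorm u ^+ 2 = sqnorm u.
Proof. by rewrite /enorm sqr_sqrtr // sqnorm_ge0. Qed.

Lemma enorm_sqnorm_fun (T : Type) (X : T -> 'rV[R]_d) :
  (fun t => enorm (X t) ^+ 2) = (fun t => sqnorm (X t)).
Proof. by apply/funext => t; rewrite enorm_sqnorm. Qed.

Lemma sqnormD u v : sqnorm (u + v) = sqnorm u + 2 * dotv u v + sqnorm v.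
Proof. rewrite /sqnorm !dotvDl !dotvDr (dotvC v u); ring. Qed.

Lemma sqnormB u v : sqnorm (u - v) = sqnorm u - 2 * dotv u v + sqnorm v.
Proof. by rewrite sqnormD dotvNr /sqnorm dotvNl dotvNr opprK mulrN. Qed.

Lemma sqnormZ c u : sqnorm (c *: u) = c ^+ 2 * sqnorm u.
Proof. by rewrite /sqnorm dotvZl dotvZr mulrA expr2. Qed.

Lemma sqnormN u : sqnorm (- u) = sqnorm u.
Proof. by rewrite /sqnorm dotvNl dotvNr opprK. Qed.

Lemma dotv_young u v c : 0 < c -> 2 * dotv u v <= c * sqnorm u + c^-1 * sqnorm v.
Proof.
move=> c0; have := sqnorm_ge0 (c *: u - v); rewrite sqnormB sqnormZ dotvZl => h.
have : 0 <= c^-1 * (c ^+ 2 * sqnorm u - 2 * (c * dotv u v) + sqnorm v).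
  by rewrite mulr_ge0 // invr_ge0 ltW.
have -> : c^-1 * (c ^+ 2 * sqnorm u - 2 * (c * dotv u v) + sqnorm v)
   = (c^-1 * c) * (c * sqnorm u) - (c^-1 * c) * (2 * dotv u v) + c^-1 * sqnorm v
  by ring.
rewrite mulVf ?gt_eqF // !mul1r; lra.
Qed.

Lemma sqnormD_le u v c : 0 < c ->
  sqnorm (u + v) <= (1 + c) * sqnorm u + (1 + c^-1) * sqnorm v.
Proof. by move=> c0; have := dotv_young u v c c0; rewrite sqnormD; lra. Qed.

Lemma sqnormD_le2 u v : sqnorm (u + v) <= 2 * sqnorm u + 2 * sqnorm v.
Proof. by have := sqnormD_le u v 1 ltr01; rewrite invr1. Qed.

Lemma normr_dotv_le u v : `|dotv u v| <= sqnorm u + sqnorm v.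
Proof.
have := dotv_young u v 1 ltr01; have := dotv_young u (- v) 1 ltr01.
rewrite dotvNr sqnormN invr1 !mul1r => h1 h2.
by rewrite ler_norml; apply/andP; split; lra.
Qed.

Lemma oppr_dotv_le u v : - dotv u v <= 4^-1 * sqnorm u + sqnorm v.
Proof.
have half_gt0 : 0 < 2^-1 :> R by rewrite invr_gt0.
have := dotv_young u (- v) _ half_gt0.
rewrite dotvNr sqnormN invrK -[4 : R]/(2 * 2)%:R natrM invfM; lra.
Qed.

Lemma sumr_const_seq I (r : seq I) (c : R) : \sum_(i <- r) c = c *+ size r.
Proof. by elim: r => [|a r IH]; rewrite ?big_nil ?big_cons ?IH ?mulrS. Qed.

Lemma sqnorm_sum_le {I} (r : seq I) (F : I -> 'rV[R]_d) :
  sqnorm (\sum_(i <- r) F i) <= (size r)%:R * \sum_(i <- r) sqnorm (F i).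
Proof.
have -> : sqnorm (\sum_(i <- r) F i) = \sum_(i <- r) \sum_(j <- r) dotv (F i) (F j).
  by rewrite /sqnorm dotv_suml; apply: eq_bigr => i _; rewrite dotv_sumr.
have cross i j : dotv (F i) (F j) <= 2^-1 * sqnorm (F i) + 2^-1 * sqnorm (F j).
  by have := dotv_young (F i) (F j) 1 ltr01; rewrite invr1 !mul1r; lra.
apply: (@le_trans _ _ (\sum_(i <- r) \sum_(j <- r)
                          (2^-1 * sqnorm (F i) + 2^-1 * sqnorm (F j)))).
  by apply: ler_sum => i _; apply: ler_sum => j _.
suff -> : \sum_(i <- r) \sum_(j <- r) (2^-1 * sqnorm (F i) + 2^-1 * sqnorm (F j))
          = (size r)%:R * \sum_(i <- r) sqnorm (F i) by [].
under eq_bigr do rewrite big_split /= sumr_const_seq -mulr_sumr.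
rewrite big_split /= sumrMnl sumr_const_seq -mulr_sumr -mulrnDl mulr_natl.
by congr (_ *+ _); lra.
Qed.

Lemma sqnorm_sum_ord_le {n} (F : 'I_n -> 'rV[R]_d) :
  sqnorm (\sum_(i < n) F i) <= n%:R * \sum_(i < n) sqnorm (F i).
Proof.
have := sqnorm_sum_le (index_enum 'I_n) F.
by rewrite (_ : size _ = n) // /index_enum -enumT -cardT card_ord.
Qed.

Lemma enorm_le u e : 0 <= e -> sqnorm u <= e ^+ 2 -> enorm u <= e.
Proof.
by move=> e0 h; rewrite /enorm -(ger0_norm e0) -sqrtr_sqr; exact: ler_wsqrtr.
Qed.

Lemma normr_coord_le u j : `|u 0 j| <= enorm u.
Proof.
rewrite -(@ler_pXn2r _ 2) //= ?nnegrE ?sqrtr_ge0 //.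
rewrite enorm_sqnorm real_normK ?num_real // /sqnorm /dotv (bigD1 j) //= -expr2.
by rewrite lerDl; apply: sumr_ge0 => k _; rewrite -expr2 sqr_ge0.
Qed.

Lemma lipschitz_sqnorm {g : 'rV[R]_d -> 'rV[R]_d} {L u v} :
  enorm (g u - g v) <= L * enorm (u - v) ->
  sqnorm (g u - g v) <= L ^+ 2 * sqnorm (u - v).
Proof.
move=> h; rewrite -!enorm_sqnorm -exprMn.
by rewrite ler_pXn2r ?nnegrE ?sqrtr_ge0 //; exact: le_trans (sqrtr_ge0 _) h.
Qed.

Lemma lipschitz_sqnorm_le (g : 'rV[R]_d -> 'rV[R]_d) L u :
  (forall x y, enorm (g x - g y) <= L * enorm (x - y)) ->
  sqnorm (g u) <= 2 * sqnorm (g 0) + 2 * L ^+ 2 * sqnorm u.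
Proof.
move=> hg; have := sqnormD_le2 (g 0) (g u - g 0); rewrite addrC subrK.
by have := lipschitz_sqnorm (hg u 0); rewrite subr0; lra.
Qed.

End EuclideanRowVectors.

Lemma floor_div_approx {R : realType} (x c : R) : 0 < c ->
  `|(Num.floor (c * x))%:~R / c - x| <= c^-1.
Proof.
move=> c0; have /andP[lo hi] := floor_itv (c * x); rewrite intrD in hi.
have -> : (Num.floor (c * x))%:~R / c - x = ((Num.floor (c * x))%:~R - c * x) / c.
  by rewrite mulrBl mulrAC mulfV ?gt_eqF // mul1r.
rewrite normrM (gtr0_norm (x := c^-1)) ?invr_gt0 // ler_pdivrMr // mulVf ?gt_eqF //.
by rewrite ler_norml; apply/andP; split; lra.
Qed.

Lemma cvg_harmonic_bound {R : realType} (u : R^nat) (l c : R) :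
  (forall k, `|u k - l| <= c * harmonic k) -> u @ \oo --> l.
Proof.
move=> ub.
have hc : (fun k => c * harmonic k) @ \oo --> 0.
  by rewrite -(mulr0 c); exact: (@cvgMl_tmp _ _ _ _ _ c _ (@cvg_harmonic R)).
apply: (@squeeze_cvgr _ _ _ _ (fun k => l - c * harmonic k) (fun k => l + c * harmonic k)).
- apply: nearW => k; have := ub k; rewrite ler_norml => /andP[b1 b2].
  by apply/andP; split; lra.
- by rewrite -[X in _ --> X]subr0; apply: cvgB => //; exact: cvg_cst.
- by rewrite -[X in _ --> X]addr0; apply: cvgD => //; exact: cvg_cst.
Qed.

(* A Lipschitz image of a random vector is measurable: the vector is the pointwise limit of its
   roundings to the grid (k+1)^-1 Z^d, and a rounded vector takes countably many values. *)
Section GridRounding.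
Context {R : realType} {d : nat}.

Definition grid_round (k : nat) (x : 'rV[R]_d) : 'rV[R]_d :=
  \row_j ((Num.floor (k.+1%:R * x 0 j))%:~R / k.+1%:R).

Lemma enorm_grid_round_le k x : enorm (grid_round k x - x) <= d%:R * harmonic k.
Proof.
have h0 : 0 <= harmonic k :> R by exact: harmonic_ge0.
apply: enorm_le; first exact: mulr_ge0.
apply: (@le_trans _ _ (\sum_(j < d) harmonic k ^+ 2)).
  apply: ler_sum => j _; rewrite -expr2 !mxE -real_normK ?num_real //.
  by rewrite ler_pXn2r ?nnegrE //; exact: floor_div_approx.
rewrite sumr_const card_ord exprMn -[_ *+ d]mulr_natl; apply: ler_wpM2r; first exact: sqr_ge0.
by rewrite -natrX ler_nat; case: d => // m; rewrite expnS expn1 leq_pmulr.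
Qed.

End GridRounding.

Section RowVectorMeasurability.
Context {R : realType} {dm : measure_display} {T : measurableType dm}.

Definition measurable_rV {d} (X : T -> 'rV[R]_d) :=
  forall j, measurable_fun setT (fun w => X w 0 j).

Lemma measurable_fun_case (U : countType) (G : T -> U) (F : U -> T -> R) :
  (forall u, measurable [set w | G w = u]) ->
  (forall u, measurable_fun setT (F u)) ->
  measurable_fun setT (fun w => F (G w) w).
Proof.
move=> mG mF _ Y mY.
have -> : setT `&` (fun w => F (G w) w) @^-1` Y =
    \bigcup_u ([set w | G w = u] `&` (setT `&` F u @^-1` Y)).
  apply/seteqP; split => [w /= [_ Yw]|w [u _ [/= Gw [_ Yw]]]].
  - by exists (G w).
  - by split => //=; rewrite Gw.
apply: countable_bigcupT_measurable; first exact: countableP.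
by move=> u; apply: measurableI => //; exact: mF.
Qed.

Lemma measurable_floor_eq (g : T -> R) (m : int) :
  measurable_fun setT g -> measurable [set w | Num.floor (g w) = m].
Proof.
move=> mg; have := mg measurableT `[m%:~R, (m + 1)%:~R[%classic (measurable_itv _).
congr measurable; apply/seteqP; split => w /=.
- by move=> [_]; rewrite /= in_itv /= -floor_eq => /eqP.
- by move=> h; split => //=; rewrite in_itv /= -floor_eq h.
Qed.

Lemma measurable_grid_round {d} (F : 'rV[R]_d -> R) k (X : T -> 'rV[R]_d) :
  measurable_rV X -> measurable_fun setT (fun w => F (grid_round k (X w))).
Proof.
move=> mX.
pose z w : {ffun 'I_d -> int} := [ffun j => Num.floor (k.+1%:R * X w 0 j)].
pose V (c : {ffun 'I_d -> int}) : 'rV[R]_d := \row_j ((c j)%:~R / k.+1%:R).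
have -> : (fun w => F (grid_round k (X w))) = (fun w => F (V (z w))).
  by apply/funext => w; congr F; apply/rowP => j; rewrite !mxE ffunE.
apply: (@measurable_fun_case _ z (fun c _ => F (V c))) => c; last first.
  exact: measurable_cst.
have -> : [set w | z w = c] =
    \bigcap_(j in setT) [set w | Num.floor (k.+1%:R * X w 0 j) = c j].
  apply/seteqP; split => w /=.
  - by move=> <- j _; rewrite ffunE.
  - by move=> h; apply/ffunP => j; rewrite ffunE h.
apply: fin_bigcap_measurable; first exact: finite_finset.
move=> j _; apply: measurable_floor_eq.
by apply: measurable_realfun.measurable_funM; [exact: measurable_cst | exact: mX].
Qed.

Lemma measurable_rV_lipschitz d d' (g : 'rV[R]_d -> 'rV[R]_d') L (X : T -> 'rV[R]_d) :
  (forall x y, enorm (g x - g y) <= L * enorm (x - y)) -> measurable_rV X ->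
  measurable_rV (fun w => g (X w)).
Proof.
move=> Lg mX j.
apply: (@measurable_realfun.measurable_fun_cvg _ _ _ _
          (fun k w => g (grid_round k (X w)) 0 j)).
  by move=> k; exact: (measurable_grid_round (fun x => g x 0 j)).
move=> w _; apply: (@cvg_harmonic_bound _ _ _ (`|L| * d%:R)) => k.
have := normr_coord_le (g (grid_round k (X w)) - g (X w)) j; rewrite !mxE => hj.
apply: le_trans hj _; apply: le_trans (Lg _ _) _; rewrite -mulrA.
apply: le_trans (ler_wpM2r (sqrtr_ge0 _) (ler_norm L)) _.
by apply: ler_wpM2l => //; exact: enorm_grid_round_le.
Qed.

Lemma measurable_dotv {d} (u v : T -> 'rV[R]_d) :
  measurable_rV u -> measurable_rV v -> measurable_fun setT (fun w => dotv (u w) (v w)).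
Proof.
by move=> hu hv; apply: measurable_sum => j; exact: measurable_realfun.measurable_funM.
Qed.

Lemma measurable_sqnorm {d} (u : T -> 'rV[R]_d) :
  measurable_rV u -> measurable_fun setT (fun w => sqnorm (u w)).
Proof. by move=> hu; exact: measurable_dotv. Qed.

End RowVectorMeasurability.

Lemma diff_sum {R : realType} (V W : normedModType R) n (f : 'I_n -> V -> W) x :
  (forall i, differentiable (f i) x) ->
  forall v, 'd (\sum_(i < n) f i) x v = \sum_(i < n) 'd (f i) x v.
Proof.
elim: n f => [|n IH] f df v.
  by rewrite !big_ord0 -[0 : V -> W]/(cst 0) diff_cst.
rewrite big_ord_recr /= diffD /=; [|exact: differentiable_sum|exact: df].
by rewrite IH // [RHS]big_ord_recr.
Qed.

Section AverageOfGradients.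
Context {R : realType} {d n : nat}.
Context {f : 'I_n -> 'rV[R]_d -> R} {gradf : 'I_n -> 'rV[R]_d -> 'rV[R]_d}.
Context {gradF : 'rV[R]_d -> 'rV[R]_d}.
Hypothesis gradf_f : forall i, is_gradient (f i) (gradf i).
Hypothesis gradF_avg : is_gradient (fun x => (n%:R)^-1 * \sum_(i < n) f i x) gradF.

Lemma gradient_average x : gradF x = (n%:R)^-1 *: \sum_(i < n) gradf i x.
Proof.
have df i : differentiable (f i) x by case: (gradf_f i x).
have dF v : dotv (gradF x) v = (n%:R)^-1 * \sum_(i < n) dotv (gradf i x) v.
  have [_ <-] := gradF_avg x.
  have -> : (fun x => (n%:R)^-1 * \sum_(i < n) f i x) = (n%:R)^-1 *: \sum_(i < n) f i.
    by apply/funext => y; rewrite fct_sumE.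
  rewrite diffZ /= ?diff_sum //; last exact: differentiable_sum.
  by congr (_ * _); apply: eq_bigr => i _; case: (gradf_f i x) => _ ->.
apply/rowP => j; rewrite -dotv_delta dF mxE summxE; congr (_ * _).
by apply: eq_bigr => i _; rewrite dotv_delta.
Qed.

Lemma lipschitz_average {L} : (0 < n)%N -> 0 <= L ->
  (forall i x y, enorm (gradf i x - gradf i y) <= L * enorm (x - y)) ->
  forall x y, enorm (gradF x - gradF y) <= L * enorm (x - y).
Proof.
move=> n0 L0 Lf x y; apply: enorm_le; first by rewrite mulr_ge0 ?sqrtr_ge0.
rewrite exprMn enorm_sqnorm !gradient_average -scalerBr -sumrB sqnormZ.
have cs := sqnorm_sum_ord_le (fun i => gradf i x - gradf i y).
have lip : \sum_(i < n) sqnorm (gradf i x - gradf i y) <= n%:R * (L ^+ 2 * sqnorm (x - y)).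
  apply: (@le_trans _ _ (\sum_(i < n) L ^+ 2 * sqnorm (x - y))).
    by apply: ler_sum => i _; exact: lipschitz_sqnorm.
  by rewrite sumr_const card_ord mulr_natl.
have n_gt0 : 0 < n%:R :> R by rewrite ltr0n.
have {}cs := le_trans cs (ler_wpM2l (ltW n_gt0) lip).
have -> : L ^+ 2 * sqnorm (x - y) =
    (n%:R)^-1 ^+ 2 * (n%:R * (n%:R * (L ^+ 2 * sqnorm (x - y)))).
  by field; rewrite gt_eqF.
exact: (ler_wpM2l (sqr_ge0 _) cs).
Qed.

End AverageOfGradients.

Definition local_iterate {R : realType} {d : nat} (w : 'rV[R]_d) (eta : R)
  (h : nat -> 'rV[R]_d) (r : nat) : 'rV[R]_d :=
  w - eta *: \sum_(1 <= p < r) h p.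

Section LocalDrift.
Context {R : realType} {d : nat}.
Variables (g : 'rV[R]_d -> 'rV[R]_d) (L eta : R) (K q : nat).
Hypothesis g_lip : forall x y, sqnorm (g x - g y) <= L ^+ 2 * sqnorm (x - y).
Hypothesis eta_small : eta ^+ 2 * L ^+ 2 * K%:R ^+ 2 <= 16^-1.
Hypothesis qK : (1 <= q <= K)%N.
Variables (mu w : 'rV[R]_d) (h : nat -> 'rV[R]_d).

Let x := local_iterate w eta h.
Let noise_sum r := \sum_(1 <= p < r) sqnorm (h p - g (x p)).

Definition local_drift_bound := 6 * sqnorm (w - mu)
  + 4 * eta ^+ 2 * (K%:R - 1) * noise_sum q + 8 * eta ^+ 2 * K%:R ^+ 2 * sqnorm (g mu).

Lemma sqnorm_local_iterate_le r :
  sqnorm (x r - mu) <=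
    4 * sqnorm (w - mu) + 4 / 3 * (eta ^+ 2 * ((r - 1)%:R * \sum_(1 <= p < r) sqnorm (h p))).
Proof.
have three_gt0 : 0 < 3 :> R by [].
have -> : x r - mu = (w - mu) + (- eta) *: \sum_(1 <= p < r) h p.
  by rewrite /x /local_iterate addrAC scaleNr.
apply: le_trans (sqnormD_le _ _ _ three_gt0) _.
have -> : 1 + 3 = 4 :> R by [].
have -> : 1 + 3^-1 = 4 / 3 :> R by field.
rewrite sqnormZ sqrrN lerD2l ler_wpM2l ?divr_ge0 // ler_wpM2l ?sqr_ge0 //.
by have := sqnorm_sum_le (index_iota 1 r) h; rewrite size_iota.
Qed.

Lemma sqnorm_le_noise_drift p :
  sqnorm (h p) <= 2 * sqnorm (h p - g (x p)) + 4 * sqnorm (g mu) + 4 * L ^+ 2 * sqnorm (x p - mu).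
Proof.
have := sqnormD_le2 (h p - g (x p)) (g mu + (g (x p) - g mu)).
rewrite [g mu + _]addrC !subrK.
have := sqnormD_le2 (g (x p) - g mu) (g mu); rewrite subrK.
have := g_lip (x p) mu; have := sqnorm_ge0 (g (x p)); lra.
Qed.

Lemma noise_sum_ge0 r : 0 <= noise_sum r.
Proof. by apply: sumr_ge0 => p _; exact: sqnorm_ge0. Qed.

Lemma noise_sum_le {r} : (1 <= r <= q)%N -> noise_sum r <= noise_sum q.
Proof.
case/andP=> r1 rq; rewrite /noise_sum [X in _ <= X](big_cat_nat (n := r)) //=.
by rewrite lerDl; apply: sumr_ge0 => p _; exact: sqnorm_ge0.
Qed.

Lemma local_drift_bound_ge0 : 0 <= local_drift_bound.
Proof.
have k1 : 1 <= K%:R :> R by rewrite ler1n; case/andP: qK; exact: leq_trans.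
have e2 := sqr_ge0 eta; have k2 := sqr_ge0 (K%:R : R).
have k1' : 0 <= K%:R - 1 :> R by rewrite subr_ge0.
rewrite /local_drift_bound !addr_ge0 //.
- exact: mulr_ge0 (ler0n _ _) (sqnorm_ge0 _).
- exact: mulr_ge0 (mulr_ge0 (mulr_ge0 (ler0n _ _) e2) k1') (noise_sum_ge0 q).
- exact: mulr_ge0 (mulr_ge0 (mulr_ge0 (ler0n _ _) e2) k2) (sqnorm_ge0 _).
Qed.

Lemma local_drift_step r : (1 <= r <= q)%N ->
  (forall p, (1 <= p < r)%N -> sqnorm (x p - mu) <= local_drift_bound) ->
  sqnorm (x r - mu) <= local_drift_bound.
Proof.
move=> hr IH; have /andP[r1 rq] := hr.
set B := local_drift_bound; set A := sqnorm (w - mu); set G := sqnorm (g mu).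
set H := \sum_(1 <= p < r) sqnorm (h p); set m : R := (r - 1)%:R.
have m0 : 0 <= m by rewrite ler0n.
have mK : m <= K%:R - 1.
  by rewrite /m natrB // lerD2r ler_nat; case/andP: qK => _; exact: leq_trans.
have e0 : 0 <= eta ^+ 2 := sqr_ge0 eta.
have B0 : 0 <= B := local_drift_bound_ge0.
have H_le : H <= 2 * noise_sum r + m * (4 * G + 4 * L ^+ 2 * B).
  apply: (@le_trans _ _ (\sum_(1 <= p < r) (2 * sqnorm (h p - g (x p))
                                           + (4 * G + 4 * L ^+ 2 * B)))).
    apply: ler_sum_nat => p hp; apply: le_trans (sqnorm_le_noise_drift p) _; rewrite -/G.
    have := ler_wpM2l (sqr_ge0 L) (IH p hp); rewrite -/B; lra.
  by rewrite big_split /= -mulr_sumr sumr_const_nat -[_ *+ (r - 1)]mulr_natl.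
have noise_term : eta ^+ 2 * m * noise_sum r <= eta ^+ 2 * (K%:R - 1) * noise_sum q.
  exact: ler_pM (mulr_ge0 e0 m0) (noise_sum_ge0 r) (ler_wpM2l e0 mK) (noise_sum_le hr).
have mm : m * m <= K%:R ^+ 2 by rewrite expr2 ler_pM //; lra.
have grad_term : eta ^+ 2 * (m * m) * G <= eta ^+ 2 * K%:R ^+ 2 * G.
  exact: (ler_wpM2r (sqnorm_ge0 _) (ler_wpM2l e0 mm)).
(* This is where eta^2 L^2 K^2 <= 1/16 enters: the drift feeds back with weight
   4/3 * 4 * 1/16 = 1/3, while the remaining terms add up to at most 2/3 of B. *)
have drift_term : eta ^+ 2 * (m * m) * L ^+ 2 * B <= 16^-1 * B.
  apply: (ler_wpM2r B0 (le_trans _ eta_small)).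
  have -> : eta ^+ 2 * (m * m) * L ^+ 2 = eta ^+ 2 * L ^+ 2 * (m * m) by ring.
  exact: (ler_wpM2l (mulr_ge0 e0 (sqr_ge0 L)) mm).
have := sqnorm_local_iterate_le r; rewrite -/H -/m -/A => drift.
have := ler_wpM2l e0 (ler_wpM2l m0 H_le).
have -> : eta ^+ 2 * (m * (2 * noise_sum r + m * (4 * G + 4 * L ^+ 2 * B))) =
  2 * (eta ^+ 2 * m * noise_sum r) + 4 * (eta ^+ 2 * (m * m) * G)
  + 4 * (eta ^+ 2 * (m * m) * L ^+ 2 * B) by ring.
move: noise_term grad_term drift_term drift; rewrite /B /local_drift_bound -/A -/G; lra.
Qed.

Lemma local_drift_le r : (1 <= r <= q)%N -> sqnorm (x r - mu) <= local_drift_bound.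
Proof.
elim/ltn_ind: r => r IH /andP[r1 rq]; apply: local_drift_step; first by rewrite r1.
move=> p /andP[p1 pr]; apply: IH => //.
by rewrite p1 (leq_trans (ltnW pr)).
Qed.

Lemma local_descent_le a :
  - dotv a (g (x q)) <= 4^-1 * sqnorm a + L ^+ 2 * local_drift_bound - dotv a (g mu).
Proof.
have := oppr_dotv_le a (g (x q) - g mu); rewrite dotvBr.
have hq : (1 <= q <= q)%N by rewrite leqnn andbT; case/andP: qK.
have := ler_wpM2l (sqr_ge0 L) (local_drift_le q hq).
have := g_lip (x q) mu; lra.
Qed.

End LocalDrift.

Section RealIntegrals.
Context {R : realType} {dm : measure_display} {T : measurableType dm}.
Variable P : probability T R.
Local Notation Rintegrable f := (P.-integrable setT (EFin \o f)).
Implicit Types f g : T -> R.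

Lemma Rintegrable_dominated {f g} : measurable_fun setT f -> Rintegrable g ->
  (forall w, `|f w| <= g w) -> Rintegrable f.
Proof.
move=> mf ig fg; apply: (le_integrable measurableT _ _ ig).
  exact/measurable_realfun.measurable_EFinP.
by move=> w _ /=; rewrite lee_fin (le_trans (fg w)) ?ler_norm.
Qed.

Lemma Rintegrable_cst (c : R) : Rintegrable (fun _ => c).
Proof. exact: finite_measure_integrable_cst. Qed.

Lemma RintegrableD {f g} : Rintegrable f -> Rintegrable g ->
  Rintegrable (fun w => f w + g w).
Proof. by move=> hf hg; exact: (integrableD measurableT hf hg). Qed.

Lemma RintegrableZl (c : R) {f} : Rintegrable f -> Rintegrable (fun w => c * f w).
Proof. by move=> hf; exact: (integrableZl measurableT c hf). Qed.

Lemma RintegrableN {f} : Rintegrable f -> Rintegrable (fun w => - f w).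
Proof. by move=> hf; exact: (integrableN hf). Qed.

Lemma RintegrableB {f g} : Rintegrable f -> Rintegrable g -> Rintegrable (fun w => f w - g w).
Proof. by move=> hf hg; apply: RintegrableD hf (RintegrableN hg). Qed.

Lemma Rintegrable_sum (I : eqType) (r : seq I) (F : I -> T -> R) :
  (forall i, i \in r -> Rintegrable (F i)) ->
  Rintegrable (fun w => \sum_(i <- r) F i w).
Proof.
elim: r => [|a r IH] hF.
  by under eq_fun do rewrite big_nil; exact: Rintegrable_cst.
under eq_fun do rewrite big_cons.
apply: RintegrableD; first by apply: hF; rewrite mem_head.
by apply: IH => i ir; apply: hF; rewrite in_cons ir orbT.
Qed.

Lemma Rintegral_sum (I : eqType) (r : seq I) (F : I -> T -> R) :
  (forall i, i \in r -> Rintegrable (F i)) ->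
  \int[P]_w (\sum_(i <- r) F i w) = \sum_(i <- r) \int[P]_w F i w.
Proof.
elim: r => [|a r IH] hF.
  by under eq_fun do rewrite big_nil; rewrite big_nil Rintegral_cst //= mul0r.
have hr i : i \in r -> Rintegrable (F i).
  by move=> ir; apply: hF; rewrite in_cons ir orbT.
under eq_fun do rewrite big_cons.
rewrite RintegralD //; [|by apply: hF; rewrite mem_head|exact: Rintegrable_sum].
by rewrite big_cons IH.
Qed.

Lemma expectation_Rintegral f : Rintegrable f -> ('E_P[f] = (\int[P]_w f w)%:E)%E.
Proof. by move=> hf; rewrite unlock fineK //; exact: integrable_fin_num. Qed.

End RealIntegrals.

Section SquareIntegrableVectors.
Context {R : realType} {dm : measure_display} {T : measurableType dm} {d : nat}.
Variable P : probability T R.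
Local Notation Rintegrable f := (P.-integrable setT (EFin \o f)).
Implicit Types X Y : T -> 'rV[R]_d.

Definition square_integrable X :=
  measurable_rV X /\ Rintegrable (fun w => sqnorm (X w)).

Lemma square_integrable_cst c : square_integrable (fun _ => c).
Proof. by split; [move=> j; exact: measurable_cst | exact: Rintegrable_cst]. Qed.

Lemma square_integrable_dominated X f : measurable_rV X -> Rintegrable f ->
  (forall w, sqnorm (X w) <= f w) -> square_integrable X.
Proof.
move=> mX intf Xf; split => //; apply: Rintegrable_dominated intf _.
  exact: measurable_sqnorm.
by move=> w; rewrite ger0_norm ?sqnorm_ge0.
Qed.

Lemma square_integrableD {X Y} : square_integrable X -> square_integrable Y ->
  square_integrable (fun w => X w + Y w).
Proof.
move=> [mX iX] [mY iY]; apply: (@square_integrable_dominated _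
  (fun w => 2 * sqnorm (X w) + 2 * sqnorm (Y w))).
- move=> j; rewrite (_ : (fun w => _) = fun w => X w 0 j + Y w 0 j).
    exact: measurable_realfun.measurable_funD.
  by apply/funext => w; rewrite mxE.
- by apply: RintegrableD; exact: RintegrableZl.
- by move=> w; exact: sqnormD_le2.
Qed.

Lemma square_integrableZ (c : R) {X} : square_integrable X ->
  square_integrable (fun w => c *: X w).
Proof.
move=> [mX iX]; apply: (@square_integrable_dominated _ (fun w => c ^+ 2 * sqnorm (X w))).
- move=> j; rewrite (_ : (fun w => _) = fun w => c * X w 0 j).
    exact: measurable_realfun.measurable_funM.
  by apply/funext => w; rewrite mxE.
- exact: RintegrableZl.
- by move=> w; rewrite sqnormZ.
Qed.

Lemma square_integrableB {X Y} : square_integrable X -> square_integrable Y ->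
  square_integrable (fun w => X w - Y w).
Proof.
move=> iX iY; have := square_integrableD iX (square_integrableZ (-1) iY).
by under eq_fun do rewrite scaleN1r.
Qed.

Lemma square_integrable_sum (I : eqType) (r : seq I) (F : I -> T -> 'rV[R]_d) :
  (forall i, i \in r -> square_integrable (F i)) ->
  square_integrable (fun w => \sum_(i <- r) F i w).
Proof.
elim: r => [|a r IH] hF.
  by under eq_fun do rewrite big_nil; exact: square_integrable_cst.
under eq_fun do rewrite big_cons.
apply: square_integrableD; first by apply: hF; rewrite mem_head.
by apply: IH => i ir; apply: hF; rewrite in_cons ir orbT.
Qed.

Lemma square_integrable_lipschitz {g : 'rV[R]_d -> 'rV[R]_d} {L X} :
  (forall x y, enorm (g x - g y) <= L * enorm (x - y)) ->
  square_integrable X -> square_integrable (fun w => g (X w)).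
Proof.
move=> Lg [mX iX].
apply: (@square_integrable_dominated _ (fun w => 2 * sqnorm (g 0) + 2 * L ^+ 2 * sqnorm (X w))).
- exact: measurable_rV_lipschitz Lg mX.
- by apply: RintegrableD; [exact: Rintegrable_cst | exact: RintegrableZl].
- by move=> w; exact: lipschitz_sqnorm_le.
Qed.

Lemma Rintegrable_dotv {X Y} : square_integrable X -> square_integrable Y ->
  Rintegrable (fun w => dotv (X w) (Y w)).
Proof.
move=> [mX iX] [mY iY]; apply: (Rintegrable_dominated P _ (RintegrableD P iX iY)).
  exact: measurable_dotv.
by move=> w; exact: normr_dotv_le.
Qed.

End SquareIntegrableVectors.

Section FavanoRegularity.
Context {R : realType} {dm : measure_display} {T : measurableType dm}.
Context {P : probability T R} {n s K d : nat} {eta : R} {w0 : 'rV[R]_d}.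
Context {S : nat -> T -> {set 'I_n}} {E : nat -> 'I_n -> T -> nat}.
Context {ht : nat -> 'I_n -> nat -> T -> 'rV[R]_d} {stoch : bool}.
Hypothesis mS : forall t (B : {set 'I_n}), (0 < t)%N -> measurable [set w | S t w = B].
Hypothesis mE : forall t i k, (0 < t)%N -> measurable [set w | E t i w = k].
Hypothesis mht : forall t i q j, (0 < t)%N -> (0 < q)%N ->
  measurable_fun setT (fun w => ht t i q w 0 j).

Let alpha := alpha_of P K E stoch.
Let W := wloc s K eta w0 S E ht alpha.

Lemma measurable_sum_ht t i a b j : (0 < t)%N -> (0 < a)%N ->
  measurable_fun setT (fun w => \sum_(a <= q < b) ht t i q w 0 j).
Proof.
move=> t0 a0.
under eq_fun do rewrite big_nat_cond big_mkcond /=.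
apply: measurable_sum => q; case: (boolP (a <= q < b)%N) => [/andP[aq _]|_].
  by apply: mht => //; exact: leq_trans aq.
exact: measurable_cst.
Qed.

Lemma measurable_hcheck t i : (0 < t)%N -> measurable_rV (hcheck K E ht alpha t i).
Proof.
move=> t0 j.
pose a1 := fine (P [set w | (0 < E t i w)%N]).
pose a2 := fine ('E_P[fun w => (minn (E t i w) K)%:R])%E.
pose F k w : R := if (0 < k)%N then
  (if stoch then a1 * (minn k K)%:R else a2)^-1 *
    \sum_(1 <= q < (minn k K).+1) ht t i q w 0 j else 0.
rewrite (_ : (fun w => _) = fun w => F (E t i w) w); last first.
  by apply/funext => w; rewrite /hcheck /F /alpha /alpha_of; case: ifP; rewrite !mxE ?summxE.
apply: measurable_fun_case => k; first exact: mE.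
rewrite /F; case: (0 < k)%N; last exact: measurable_cst.
by apply: measurable_realfun.measurable_funM; [exact: measurable_cst | exact: measurable_sum_ht].
Qed.

Lemma measurable_state t :
  measurable_rV (wsrv s K eta w0 S E ht alpha t) /\ forall i, measurable_rV (W t i).
Proof.
elim: t => [|t [IHs IHl]].
  by split => [|i] j; rewrite /W /wsrv /wloc /= ?ffunE; exact: measurable_cst.
have hs : measurable_rV (wsrv s K eta w0 S E ht alpha t.+1).
  move=> j.
  pose F (B : {set 'I_n}) w : R := (s.+1%:R)^-1 * (wsrv s K eta w0 S E ht alpha t w 0 j +
    \sum_i (if i \in B then W t i w 0 j - eta * hcheck K E ht alpha t.+1 i w 0 j else 0)).
  rewrite (_ : (fun w => _) = fun w => F (S t.+1 w) w); last first.
    apply/funext => w; rewrite /F /wsrv /= !mxE summxE.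
    by congr (_ * (_ + _)); rewrite big_mkcond; apply: eq_bigr => i _; rewrite !mxE.
  apply: measurable_fun_case => B; first exact: mS.
  apply: measurable_realfun.measurable_funM; first exact: measurable_cst.
  apply: measurable_realfun.measurable_funD; first exact: IHs.
  apply: measurable_sum => i; case: (i \in B); last exact: measurable_cst.
  apply: measurable_realfun.measurable_funB; first exact: IHl.
  apply: measurable_realfun.measurable_funM; first exact: measurable_cst.
  exact: measurable_hcheck.
split => // i j.
pose F (B : {set 'I_n}) w : R :=
  if i \in B then wsrv s K eta w0 S E ht alpha t.+1 w 0 j else W t i w 0 j.
rewrite (_ : (fun w => _) = fun w => F (S t.+1 w) w); last first.
  by apply/funext => w; rewrite /F /W /wloc /wsrv /= ffunE; case: ifP.
apply: measurable_fun_case => B; first exact: mS.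
by rewrite /F; case: (i \in B); [exact: hs | exact: IHl].
Qed.

Hypothesis int_wsrv : forall t,
  P.-integrable setT (fun w => (enorm (wsrv s K eta w0 S E ht alpha t w) ^+ 2)%:E).
Hypothesis int_wloc : forall t i, P.-integrable setT (fun w => (enorm (W t i w) ^+ 2)%:E).

Hypothesis int_ht : forall t i q, (0 < t)%N -> (0 < q)%N ->
  P.-integrable setT (fun w => (enorm (ht t i q w) ^+ 2)%:E).

Lemma square_integrable_ht t i q : (0 < t)%N -> (0 < q)%N -> square_integrable P (ht t i q).
Proof.
move=> t0 q0; split; first by move=> j; exact: mht.
by rewrite -enorm_sqnorm_fun; exact: int_ht.
Qed.

Lemma square_integrable_wloc t i : square_integrable P (W t i).
Proof.
split; first exact: (measurable_state t).2.
by rewrite -enorm_sqnorm_fun; exact: int_wloc.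
Qed.

Lemma square_integrable_mu t : square_integrable P (mu s K eta w0 S E ht alpha t).
Proof.
apply: square_integrableZ; apply: square_integrableD.
  split; first exact: (measurable_state t).1.
  by rewrite -enorm_sqnorm_fun; exact: int_wsrv.
by apply: square_integrable_sum => i _; exact: square_integrable_wloc.
Qed.

End FavanoRegularity.

Section ExpectedLocalDescent.
Context {R : realType} {dm : measure_display} {T : measurableType dm} {d : nat}.
Context {P : probability T R}.
Local Notation Rintegrable f := (P.-integrable setT (EFin \o f)).
Context {G g : 'rV[R]_d -> 'rV[R]_d} {L eta sigma : R} {K q : nat}.
Hypothesis G_lip : forall x y, enorm (G x - G y) <= L * enorm (x - y).
Hypothesis g_lip : forall x y, enorm (g x - g y) <= L * enorm (x - y).
Hypothesis eta_small : eta ^+ 2 * L ^+ 2 * K%:R ^+ 2 <= 16^-1.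
Hypothesis qK : (1 <= q <= K)%N.
Context {mu w : T -> 'rV[R]_d} {h : nat -> T -> 'rV[R]_d}.
Hypothesis mu_L2 : square_integrable P mu.
Hypothesis w_L2 : square_integrable P w.
Hypothesis h_L2 : forall p, (0 < p)%N -> square_integrable P (h p).

Let x r v := local_iterate (w v) eta (h^~ v) r.

Lemma square_integrable_local_iterate r : square_integrable P (x r).
Proof.
rewrite /x /local_iterate /=; apply: (square_integrableB P w_L2).
apply: square_integrableZ; apply: square_integrable_sum => p.
by rewrite mem_index_iota => /andP[p0 _]; exact: h_L2.
Qed.

Let noise_L2 p : (0 < p)%N -> square_integrable P (fun v => h p v - g (x p v)).
Proof.
move=> p0; apply: (square_integrableB P (h_L2 p p0)).
exact: (square_integrable_lipschitz P g_lip (square_integrable_local_iterate p)).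
Qed.

Let GL2 := square_integrable_lipschitz P G_lip mu_L2.
Let gL2 := square_integrable_lipschitz P g_lip mu_L2.
Let int_drift := (square_integrableB P w_L2 mu_L2).2.
Let int_cross := Rintegrable_dotv P GL2 gL2.

Let int_descent : Rintegrable (fun v => - dotv (G (mu v)) (g (x q v))).
Proof.
apply: RintegrableN; apply: (Rintegrable_dotv P GL2).
exact: (square_integrable_lipschitz P g_lip (square_integrable_local_iterate q)).
Qed.

Lemma Rintegral_local_descent_le :
  \int[P]_v (- dotv (G (mu v)) (g (x q v))) <=
    4^-1 * \int[P]_v sqnorm (G (mu v))
    + L ^+ 2 * (6 * \int[P]_v sqnorm (w v - mu v)
      + 4 * eta ^+ 2 * (K%:R - 1) *
          \sum_(1 <= p < q) \int[P]_v sqnorm (h p v - g (x p v))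
      + 8 * eta ^+ 2 * K%:R ^+ 2 * \int[P]_v sqnorm (g (mu v)))
    - \int[P]_v dotv (G (mu v)) (g (mu v)).
Proof.
have iA := GL2.2; have iB := int_drift; have iC := gL2.2; have iD := int_cross.
have iN p : p \in index_iota 1 q -> Rintegrable (fun v => sqnorm (h p v - g (x p v))).
  by rewrite mem_index_iota => /andP[p0 _]; exact: (noise_L2 p p0).2.
have iS := Rintegrable_sum P _ _ _ iN.
pose c1 := 4 * eta ^+ 2 * (K%:R - 1); pose c2 := 8 * eta ^+ 2 * K%:R ^+ 2.
have iBS := RintegrableD P (RintegrableZl P 6 iB) (RintegrableZl P c1 iS).
have iI := RintegrableD P iBS (RintegrableZl P c2 iC).
have iF := RintegrableD P (RintegrableZl P 4^-1 iA) (RintegrableZl P (L ^+ 2) iI).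
have g_lip2 u v := lipschitz_sqnorm (g_lip u v).
apply: le_trans (le_Rintegral measurableT int_descent (RintegrableB P iF iD) _) _.
  move=> v _.
  by have := local_descent_le g L eta K q g_lip2 eta_small qK (mu v) (w v) (h^~ v) (G (mu v)).
rewrite (RintegralB measurableT iF iD).
rewrite (RintegralD measurableT (RintegrableZl P 4^-1 iA) (RintegrableZl P (L ^+ 2) iI)).
rewrite !RintegralZl // (RintegralD measurableT iBS (RintegrableZl P c2 iC)).
rewrite (RintegralD measurableT (RintegrableZl P 6 iB) (RintegrableZl P c1 iS)).
by rewrite !RintegralZl // (Rintegral_sum P _ _ _ iN).
Qed.

Hypothesis noise_var : forall p, (0 < p < q)%N ->
  \int[P]_v sqnorm (h p v - g (x p v)) <= sigma ^+ 2.

Lemma sum_noise_le :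
  \sum_(1 <= p < q) \int[P]_v sqnorm (h p v - g (x p v)) <= (K%:R - 1) * sigma ^+ 2.
Proof.
apply: (@le_trans _ _ (\sum_(1 <= p < q) sigma ^+ 2)).
  by apply: ler_sum_nat => p; exact: noise_var.
rewrite sumr_const_nat -[_ *+ _]mulr_natl; apply: (ler_wpM2r (sqr_ge0 sigma)).
by case/andP: qK => q1 qK'; rewrite natrB // lerD2r ler_nat.
Qed.

Lemma expected_local_descent_le :
  ('E_P[fun v => (- dotv (G (mu v)) (g (x q v)))%R]
   <= 'E_P[fun v => (enorm (G (mu v)) ^+ 2)%R] * (4^-1)%:E
      + ((4 * L ^+ 2 * eta ^+ 2 * K%:R ^+ 2 * sigma ^+ 2)%:E
         + (20 * L ^+ 2)%:E * 'E_P[fun v => (enorm (w v - mu v) ^+ 2)%R]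
         + (16 * L ^+ 2 * eta ^+ 2 * K%:R ^+ 2)%:E
             * 'E_P[fun v => (enorm (g (mu v)) ^+ 2)%R])
      - 'E_P[fun v => dotv (G (mu v)) (g (mu v))])%E.
Proof.
have := Rintegral_local_descent_le; have := sum_noise_le.
rewrite !enorm_sqnorm_fun (expectation_Rintegral P _ int_descent) (expectation_Rintegral P _ GL2.2).
rewrite (expectation_Rintegral P _ int_drift) (expectation_Rintegral P _ gL2.2).
rewrite (expectation_Rintegral P _ int_cross) -!EFinM -!EFinD lee_fin.
set S := \sum_(1 <= p < q) _; set B := \int[P]_v sqnorm (w v - mu v).
set C := \int[P]_v sqnorm (g (mu v)) => noise descent.
have B0 : 0 <= B by apply: Rintegral_ge0 => v _; exact: sqnorm_ge0.
have C0 : 0 <= C by apply: Rintegral_ge0 => v _; exact: sqnorm_ge0.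
have a0 : 0 <= L ^+ 2 * eta ^+ 2 := mulr_ge0 (sqr_ge0 L) (sqr_ge0 eta).
have k1 : 0 <= K%:R - 1 :> R by rewrite subr_ge0 ler1n; case/andP: qK; exact: leq_trans.
have k2 : (K%:R - 1) ^+ 2 <= K%:R ^+ 2 :> R.
  by rewrite ler_pXn2r ?nnegrE ?ler0n // gerDl lerN10.
have noiseK : L ^+ 2 * (4 * eta ^+ 2 * (K%:R - 1) * S)
    <= 4 * L ^+ 2 * eta ^+ 2 * K%:R ^+ 2 * sigma ^+ 2.
  have -> : L ^+ 2 * (4 * eta ^+ 2 * (K%:R - 1) * S)
      = 4 * (L ^+ 2 * eta ^+ 2) * ((K%:R - 1) * S) by ring.
  have -> : 4 * L ^+ 2 * eta ^+ 2 * K%:R ^+ 2 * sigma ^+ 2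
      = 4 * (L ^+ 2 * eta ^+ 2) * (K%:R ^+ 2 * sigma ^+ 2) by ring.
  apply: ler_wpM2l; first by rewrite mulr_ge0.
  apply: le_trans (ler_wpM2l k1 noise) _; rewrite mulrA -expr2.
  exact: (ler_wpM2r (sqr_ge0 sigma) k2).
have BL : 0 <= L ^+ 2 * B := mulr_ge0 (sqr_ge0 L) B0.
have CL : 0 <= L ^+ 2 * eta ^+ 2 * K%:R ^+ 2 * C := mulr_ge0 (mulr_ge0 a0 (sqr_ge0 _)) C0.
move: descent noiseK; lra.
Qed.

End ExpectedLocalDescent.

Lemma step_size_sq_le {R : realType} {L eta : R} {K : nat} :
  0 < L -> 0 <= eta -> (1 <= K)%N -> eta < (4 * L * K%:R ^+ 2)^-1 ->
  eta ^+ 2 * L ^+ 2 * K%:R ^+ 2 <= 16^-1.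
Proof.
move=> L0 eta0 K1 eta_lt.
have k1 : 1 <= K%:R :> R by rewrite ler1n.
have u0 : 0 <= eta * L * K%:R := mulr_ge0 (mulr_ge0 eta0 (ltW L0)) (le_trans ler01 k1).
have u4 : 4 * (eta * L * K%:R) <= 1.
  have pos : 0 < 4 * L * K%:R ^+ 2.
    by rewrite mulr_gt0 ?mulr_gt0 ?exprn_gt0 // (lt_le_trans ltr01 k1).
  move: eta_lt; rewrite -(ltr_pM2r pos) mulVf ?gt_eqF // => lt1.
  apply: le_trans (ltW lt1); rewrite expr2.
  have := ler_wpM2l u0 k1; rewrite mulr1 => h; nra.
have -> : eta ^+ 2 * L ^+ 2 * K%:R ^+ 2 = (eta * L * K%:R) ^+ 2 by ring.
rewrite expr2; nra.
Qed.

Lemma Rintegral_sqnorm_le {R : realType} {dm : measure_display} {T : measurableType dm}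
  (P : probability T R) {d} (F : set (set T)) (X : T -> 'rV[R]_d) sigma :
  cond_sqnorm_le P <<s F >> X sigma -> \int[P]_w sqnorm (X w) <= sigma ^+ 2.
Proof.
move=> [iX le_sigma].
have := le_sigma setT (dynkinT (sigma_algebra_dynkin (smallest_sigma_algebra setT F))).
rewrite probability_setT mule1 -lee_fin -enorm_sqnorm_fun; apply: le_trans.
by rewrite /Rintegral fineK //; exact: integrable_fin_num.
Qed.

Theorem mainTheorem8 (R : realType) (dm : measure_display)
  (T : measurableType dm) (P : probability T R)
  (n s K d : nat) (eta L sigma : R)
  (f : 'I_n -> 'rV[R]_d -> R) (gradf : 'I_n -> 'rV[R]_d -> 'rV[R]_d)
  (gradF : 'rV[R]_d -> 'rV[R]_d) (w0 : 'rV[R]_d)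
  (S : nat -> T -> {set 'I_n}) (E : nat -> 'I_n -> T -> nat)
  (ht : nat -> 'I_n -> nat -> T -> 'rV[R]_d) (stoch : bool) :
  let alpha := alpha_of P K E stoch in
  let W := wloc s K eta w0 S E ht alpha in
  let M := mu s K eta w0 S E ht alpha in
  let X := query s K eta w0 S E ht alpha in
  let noise t i q w := ht t i q w - gradf i (X t i q w) in
  (1 <= n)%N -> (1 <= s <= n)%N -> (1 <= K)%N -> (1 <= d)%N -> 0 < eta ->
  (forall i, is_gradient (f i) (gradf i)) ->
  is_gradient (fun x => (n%:R)^-1 * \sum_(i < n) f i x) gradF ->
  0 < L ->
  (forall i x y, enorm (gradf i x - gradf i y) <= L * enorm (x - y)) ->
  eta < (4 * L * (K%:R) ^+ 2)^-1 -> eta < (2 * L * K%:R)^-1 ->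
  (forall t (B : {set 'I_n}), (0 < t)%N -> measurable [set w | S t w = B]) ->
  (forall t i k, (0 < t)%N -> measurable [set w | E t i w = k]) ->
  (forall t i q j, (0 < t)%N -> (0 < q)%N ->
     measurable_fun setT (fun w => ht t i q w 0 j)) ->
  (forall t (B : {set 'I_n}), (0 < t)%N ->
     P [set w | S t w = B] = (if #|B| == s then ('C(n, s)%:R)^-1 else 0)%:E) ->
  (forall t i, (0 < t)%N -> (0 < P [set w | (0 < E t i w)%N])%E) ->
  (forall t, (0 < t)%N ->
     indep P <<s ev_set (S t) `|` E_events E t >>
             <<s past_events S E ht t `|` round_events ht t >>) ->
  (forall t, (0 < t)%N -> indep P <<s ev_set (S t) >> <<s E_events E t >>) ->
  (forall t i q, (0 < t)%N -> (0 < q)%N ->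
     cond_mean_zero P <<s past_events S E ht t `|` own_events ht t i q >>
                    (noise t i q) /\
     cond_sqnorm_le P <<s past_events S E ht t `|` own_events ht t i q >>
                    (noise t i q) sigma) ->
  (forall t, P.-integrable setT
     (fun w => (enorm (wsrv s K eta w0 S E ht alpha t w) ^+ 2)%:E)) ->
  (forall t i, P.-integrable setT (fun w => (enorm (W t i w) ^+ 2)%:E)) ->
  (forall t i q, (0 < t)%N -> (0 < q)%N ->
     P.-integrable setT (fun w => (enorm (ht t i q w) ^+ 2)%:E)) ->
  forall (i : 'I_n) (t q : nat), (1 <= q <= K)%N ->
  ('E_P[fun w => (- dotv (gradF (M t w)) (gradf i (X t.+1 i q w)))%R]
   <= 'E_P[fun w => (enorm (gradF (M t w)) ^+ 2)%R] * (4^-1)%:E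
      + ((4 * L ^+ 2 * eta ^+ 2 * (K%:R) ^+ 2 * sigma ^+ 2)%:E
         + (20 * L ^+ 2)%:E * 'E_P[fun w => (enorm (W t i w - M t w) ^+ 2)%R]
         + (16 * L ^+ 2 * eta ^+ 2 * (K%:R) ^+ 2)%:E
             * 'E_P[fun w => (enorm (gradf i (M t w)) ^+ 2)%R])
      - 'E_P[fun w => dotv (gradF (M t w)) (gradf i (M t w))])%E.
Proof.
move=> alpha W M X noise n1 _ K1 _ eta0 grad_f grad_F L0 f_lip eta_lt _
  mS mE mht _ _ _ _ oracle int_wsrv int_wloc int_ht i t q qK.
have F_lip := lipschitz_average grad_f grad_F n1 (ltW L0) f_lip.
have eta_small := step_size_sq_le L0 (ltW eta0) K1 eta_lt.
apply: (expected_local_descent_le F_lip (f_lip i) eta_small qK).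
- exact: square_integrable_mu mS mE mht int_wsrv int_wloc t.
- exact: square_integrable_wloc mS mE mht int_wloc t i.
- by move=> p p0; exact: square_integrable_ht.
- by move=> p /andP[p0 _]; exact: Rintegral_sqnorm_le (oracle t.+1 i p isT p0).2.
Qed.
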